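(* Let $n\ge 4$ and let $T$ be the one-column tableau with entries $i<j$ in $[n]$ (two rows), and suppose $T$ is a non-frozen prime tableau in $\mathrm{SSYT}(2,[n])$. Then $F_{2,n}(v_T)$ induces a split positroidal subdivision of the hypersimplex $\Delta(2,n)$, i.e. a positroidal subdivision with exactly two maximal cells.
   Context: $\mathrm{SSYT}(2,[n])$ denotes rectangular semistandard Young tableaux with $2$ rows and entries in $[n]$. A one-column tableau with entries $i<j$ is frozen if $\{i,j\}$ is a cyclic interval of $[n]$, i.e. $j=i+1$ or $(i,j)=(1,n)$; non-frozen means not frozen. Tableaux index the dual canonical basis of the Grassmannian coordinate ring $\mathbb{C}[\mathrm{Gr}(2,n)]$ (for a one-column tableau with entries $i<j$ the basis element is the Plücker coordinate $p_{ij}$); $T$ is prime if its basis element is not the product of the basis elements of two nontrivial tableaux. For $i\in[k-1]$, $j\in[n-k]$ (here $k=2$), the fundamental tableau $T_{i,j}$ is the one-column tableau with entries $[j,j+k]\setminus\{i+j\}$; every tableau is equivalent, modulo removing columns whose entries are consecutive integers, to a unique union of fundamental tableaux $\bigcup T_{i,j}^{\cup c_{i,j}}$, and $v_T=\sum c_{i,j}e_{i,j}\in\mathbb{R}^{(k-1)(n-k)}$. $F_{k,n}(y)=\sum_{J\in\binom{[n]}{k}}P_J(y)e^J$ (modulo the lineality space), where $P_J$ is the tropicalization of the Plücker coordinate $p_J$ of the Speyer–Williams web matrix, the $k\times n$ matrix parametrizing the positive Grassmannian by $(k-1)(n-k)$ positive variables, whose maximal minors are subtraction-free polynomials in these variables.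 The vector $(P_J(v_T))_J$ induces the regular subdivision of $\Delta(k,n)=\mathrm{conv}\{e_J: J\in\binom{[n]}{k}\}$ obtained by lifting $e_J$ to height $P_J(v_T)$ and projecting the lower faces; it is positroidal if all cells are matroid polytopes of positroids (matroids representable by real matrices with all maximal minors nonnegative). *)

(* concrete reals R, lists. All indices are 1-based as in the paper. *)
From Stdlib Require Import Reals List Permutation Arith Lia Lra.
Import ListNotations.
Open Scope R_scope.

(* J = (i,j) encodes the 2-subset {i<j} of [n] = {1,...,n}. *)
Definition is_pair (n : nat) (J : nat * nat) : Prop :=
  (1 <= fst J)%nat /\ (fst J < snd J)%nat /\ (snd J <= n)%nat.

(* the one-column tableau with entries i<j is frozen iff {i,j} is a cyclic
   interval of [n] *)
Definition frozen (n i j : nat) : Prop := j = S i \/ (i = 1%nat /\ j = n).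

(* A two-row (rectangular) tableau is determined by the multisets of entries of
   its two rows; we store the rows as lists, considered up to permutation. *)
Definition tableau2 : Type := (list nat * list nat)%type.

Definition cols_tab (cs : list (nat * nat)) : tableau2 := (map fst cs, map snd cs).

Definition tab_union (T U : tableau2) : tableau2 := (fst T ++ fst U, snd T ++ snd U).

Definition tab_same (T U : tableau2) : Prop :=
  Permutation (fst T) (fst U) /\ Permutation (snd T) (snd U).

Definition onecol (a b : nat) : tableau2 := ([a], [b]).

Definition consec_ok (n : nat) (C : list nat) : Prop :=
  Forall (fun i => (1 <= i)%nat /\ (S i <= n)%nat) C.
Definition consec_cols (C : list nat) : tableau2 := cols_tab (map (fun i => (i, S i)) C).

(* equivalence modulo removing columns whose entries are consecutive integers *)
Definition tab_equiv (n : nat) (T U : tableau2) : Prop :=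
  exists C D : list nat, consec_ok n C /\ consec_ok n D /\
    tab_same (tab_union T (consec_cols C)) (tab_union U (consec_cols D)).

(* k = 2: fundamental tableau T_{1,j} (j in [n-2]) = one column with entries
   [j, j+2] \ {j+1} = {j, j+2} *)
Definition fund_tab (j : nat) : nat * nat := (j, (j + 2)%nat).

(* union over j in [n-2] of T_{1,j}^{∪ c_j}; the vector v_T = sum c_j e_{1,j} is
   encoded by the function c (only c 1, ..., c (n-2) are used). *)
Definition fund_union (n : nat) (c : nat -> nat) : tableau2 :=
  cols_tab (flat_map (fun j => repeat (fund_tab j) (c j)) (seq 1 (n - 2))).

(* variables x_{1,j}, j in [n-2], are encoded as x : nat -> R (x j = x_{1,j}).
   Gaps d_1 = 1, d_m = x_{m-1} (2 <= m <= n-1). *)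
Definition web_gap (x : nat -> R) (m : nat) : R :=
  match m with O => 0 | S O => 1 | S m' => x m' end.

Definition web_t (x : nat -> R) (j : nat) : R :=
  fold_right Rplus 0 (map (web_gap x) (seq 1 (j - 1))).

Definition web_matrix (x : nat -> R) (r j : nat) : R :=
  match r with S O => 1 | _ => web_t x j end.

Definition web_plucker (x : nat -> R) (i j : nat) : R :=
  web_matrix x 1 i * web_matrix x 2 j - web_matrix x 1 j * web_matrix x 2 i.

(* Subtraction-free expansion of p_{ij}: a list of monomials, each monomial
   being the list (with multiplicity) of the indices of its variables. *)
Definition gap_monomial (m : nat) : list nat :=
  match m with O => [] | S O => [] | S m' => [m'] end.
Definition web_plucker_monomials (i j : nat) : list (list nat) :=
  map gap_monomial (seq i (j - i)).

Definition eval_monomial (x : nat -> R) (mo : list nat) : R :=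
  fold_right Rmult 1 (map x mo).
Definition eval_poly (x : nat -> R) (ms : list (list nat)) : R :=
  fold_right Rplus 0 (map (eval_monomial x) ms).

(* tropicalization (min convention) of a sum of monomials *)
Definition trop_monomial (y : nat -> R) (mo : list nat) : R :=
  fold_right Rplus 0 (map y mo).
Definition trop_poly (y : nat -> R) (ms : list (list nat)) : R :=
  match ms with
  | [] => 0
  | m :: ms' => fold_right (fun m' acc => Rmin (trop_monomial y m') acc)
                           (trop_monomial y m) ms'
  end.

Definition trop_plucker (i j : nat) (y : nat -> R) : R :=
  trop_poly y (web_plucker_monomials i j).

(* sanity check: the monomial list is indeed the expansion of the minor *)
Lemma web_t_split (x : nat -> R) (i k : nat) : (1 <= i)%nat ->
  web_t x (i + k) = web_t x i + eval_poly x (map gap_monomial (seq i k)).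
Proof.
  intros Hi. unfold web_t.
  replace (i + k - 1)%nat with ((i - 1) + k)%nat by lia.
  rewrite seq_app, map_app, fold_right_app.
  replace (1 + (i - 1))%nat with i by lia.
  unfold eval_poly. rewrite map_map.
  assert (H : forall a k0, (1 <= a)%nat ->
     fold_right Rplus 0 (map (fun m => eval_monomial x (gap_monomial m)) (seq a k0))
     = fold_right Rplus 0 (map (web_gap x) (seq a k0))).
  { intros a k0; revert a; induction k0 as [|k0 IH]; intros a Ha; simpl; [reflexivity|].
    rewrite IH by lia. destruct a as [|[|a]]; [lia| |]; unfold eval_monomial; simpl; ring. }
  rewrite H by lia.
  generalize (fold_right Rplus 0 (map (web_gap x) (seq i k))). intro s.
  induction (map (web_gap x) (seq 1 (i - 1))); simpl; lra.
Qed.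

Lemma web_plucker_expansion (x : nat -> R) (i j : nat) :
  (1 <= i)%nat -> (i < j)%nat ->
  web_plucker x i j = eval_poly x (web_plucker_monomials i j).
Proof.
  intros Hi Hij. unfold web_plucker, web_matrix, web_plucker_monomials.
  replace j with (i + (j - i))%nat at 1 by lia.
  rewrite (web_t_split x i (j - i)) by lia. ring.
Qed.

(* vertex e_J of Delta(2,n) lifted to height h J.  A cell of the induced regular
   subdivision (projection of a lower face) is recorded by the set S of
   vertices it contains: S is the set of J where some affine function
   l(x) = c.x + c0 with l(e_J) <= h J for all J attains equality. *)
Definition is_cell (n : nat) (h : nat * nat -> R) (S : nat * nat -> Prop) : Prop :=
  (exists J, is_pair n J /\ S J) /\
  (forall J, S J -> is_pair n J) /\
  exists (c : nat -> R) (c0 : R), forall J, is_pair n J ->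
    c (fst J) + c (snd J) + c0 <= h J /\
    (S J <-> c (fst J) + c (snd J) + c0 = h J).

Definition same_cell (n : nat) (S S' : nat * nat -> Prop) : Prop :=
  forall J, is_pair n J -> (S J <-> S' J).

Definition maximal_cell (n : nat) (h : nat * nat -> R) (S : nat * nat -> Prop) : Prop :=
  is_cell n h S /\
  forall S', is_cell n h S' -> (forall J, S J -> S' J) -> same_cell n S S'.

(* S is the set of bases of a positroid: represented by a real 2 x n matrix
   (rows a, b) with all maximal minors nonnegative; bases = nonzero minors. *)
Definition is_positroid (n : nat) (S : nat * nat -> Prop) : Prop :=
  exists a b : nat -> R,
    (forall J, is_pair n J -> 0 <= a (fst J) * b (snd J) - a (snd J) * b (fst J)) /\
    (forall J, is_pair n J -> (S J <-> a (fst J) * b (snd J) - a (snd J) * b (fst J) <> 0)).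

Definition positroidal_subdivision (n : nat) (h : nat * nat -> R) : Prop :=
  forall S, is_cell n h S -> is_positroid n S.

Definition split_positroidal_subdivision (n : nat) (h : nat * nat -> R) : Prop :=
  positroidal_subdivision n h /\
  exists S1 S2, maximal_cell n h S1 /\ maximal_cell n h S2 /\ ~ same_cell n S1 S2 /\
    forall S, maximal_cell n h S -> same_cell n S S1 \/ same_cell n S S2.

Definition F2_heights (y : nat -> R) : nat * nat -> R :=
  fun J => trop_plucker (fst J) (snd J) y.

(* For the column {a < b}, the balance #{top entries <= x} - #{bottom entries <= x+1} is
   invariant under adding consecutive columns, so it forces v_T to be the indicator of the
   fundamental columns a <= j <= b - 2.  Hence P_{pq}(v_T) = min_{p <= m < q} (v_T)_{m-1} is 1 when
   {p, q} lies in the interval I = [a+1, b] and 0 otherwise: the lifting bends Delta(2,n) along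
   the hyperplane x(I) = 1.  Writing a lower face as the set of pairs where a potential w with
   w k + w l <= h(k,l) is tight, a face cannot contain both a pair inside I and a pair outside I,
   so every cell lies in {J : J not inside I} or in {J : J meets I}.  These two cells are then the
   two maximal ones as soon as neither contains the other, i.e. I and its complement both have
   two elements, which is where T non-frozen is used.  A short
   case analysis on w shows that every tight set is a rank-2 matroid whose parallel classes are
   cyclic intervals, hence a positroid. *)

From Stdlib Require Import Reals List Permutation ZArith Lia Lra Classical ClassicalEpsilon.
Open Scope R_scope.

Definition count_le (x : nat) (l : list nat) : nat :=
  list_sum (map (fun i => if i <=? x then 1 else 0)%nat l).

Definition col_balance (x : nat) (T : tableau2) : Z :=
  (Z.of_nat (count_le x (fst T)) - Z.of_nat (count_le (S x) (snd T)))%Z.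

Lemma count_le_app x l l' : count_le x (l ++ l') = (count_le x l + count_le x l')%nat.
Proof. unfold count_le. now rewrite map_app, list_sum_app. Qed.

Lemma count_le_perm x l l' : Permutation l l' -> count_le x l = count_le x l'.
Proof. intro H. apply Permutation_list_sum, Permutation_map, H. Qed.

Lemma col_balance_union x T U :
  col_balance x (tab_union T U) = (col_balance x T + col_balance x U)%Z.
Proof. unfold col_balance, tab_union; simpl. rewrite !count_le_app. lia. Qed.

Lemma col_balance_same x T U : tab_same T U -> col_balance x T = col_balance x U.
Proof. intros [Ht Hb]. unfold col_balance. now rewrite (count_le_perm x _ _ Ht), (count_le_perm (S x) _ _ Hb). Qed.

Lemma col_balance_onecol x p q :
  col_balance x (onecol p q) = (Z.b2z (p <=? x)%nat - Z.b2z (q <=? S x)%nat)%Z.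
Proof. unfold col_balance, count_le; simpl. destruct (p <=? x), (q <=? S x); reflexivity. Qed.

Lemma cols_tab_cons p cs : cols_tab (p :: cs) = tab_union (onecol (fst p) (snd p)) (cols_tab cs).
Proof. reflexivity. Qed.

Lemma cols_tab_app cs ds : cols_tab (cs ++ ds) = tab_union (cols_tab cs) (cols_tab ds).
Proof. unfold cols_tab, tab_union. now rewrite !map_app. Qed.

Lemma col_balance_consec x C : col_balance x (consec_cols C) = 0%Z.
Proof.
  induction C as [|i C IH]; [reflexivity|].
  unfold consec_cols in *. simpl map. rewrite cols_tab_cons, col_balance_union, IH, col_balance_onecol.
  simpl. lia.
Qed.

Lemma col_balance_repeat x p m :
  col_balance x (cols_tab (repeat p m)) = (Z.of_nat m * col_balance x (onecol (fst p) (snd p)))%Z.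
Proof.
  induction m as [|m IH]; [reflexivity|].
  simpl repeat. rewrite cols_tab_cons, col_balance_union, IH. lia.
Qed.

Ltac destruct_nat_tests :=
  repeat match goal with
  | |- context [(?m <=? ?k)%nat] => destruct (Nat.leb_spec m k)
  | |- context [(?m <? ?k)%nat] => destruct (Nat.ltb_spec m k)
  end.

Lemma col_balance_fund x (c : nat -> nat) s k :
  col_balance x (cols_tab (flat_map (fun j => repeat (fund_tab j) (c j)) (seq s k))) =
  (if andb (s <=? x)%nat (x <? s + k)%nat then Z.of_nat (c x) else 0)%Z.
Proof.
  revert s; induction k as [|k IH]; intro s.
  - destruct_nat_tests; simpl; reflexivity || lia.
  - simpl seq. simpl flat_map.
    rewrite cols_tab_app, col_balance_union, IH, col_balance_repeat, col_balance_onecol.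
    unfold fund_tab; simpl fst; simpl snd.
    destruct (Nat.eq_dec s x) as [->|Hsx]; destruct_nat_tests; simpl; lia.
Qed.

Lemma fund_coeff_of_tab_equiv n a b (c : nat -> nat) :
  (a < b)%nat -> tab_equiv n (onecol a b) (fund_union n c) ->
  forall x, (1 <= x <= n - 2)%nat ->
  ((a <= x /\ x + 2 <= b)%nat -> c x = 1%nat) /\ (~ (a <= x /\ x + 2 <= b)%nat -> c x = 0%nat).
Proof.
  intros Hab [C [D [_ [_ Hsame]]]] x Hx.
  apply (col_balance_same x) in Hsame.
  rewrite !col_balance_union, !col_balance_consec, col_balance_onecol in Hsame.
  unfold fund_union in Hsame. rewrite col_balance_fund in Hsame.
  revert Hsame. destruct_nat_tests; simpl; lia.
Qed.

Definition interval_ind (a b k : nat) : R := if ((a <? k) && (k <=? b))%bool then 1 else 0.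

Lemma interval_ind_cases a b k :
  ((a < k <= b)%nat /\ interval_ind a b k = 1) \/ (~ (a < k <= b)%nat /\ interval_ind a b k = 0).
Proof. unfold interval_ind. destruct (Nat.ltb_spec a k), (Nat.leb_spec k b); simpl; [left|right..]; split; reflexivity || lia. Qed.

Ltac interval_cases a b k :=
  let E := fresh in
  destruct (interval_ind_cases a b k) as [[? E]|[? E]]; rewrite E in *.

Lemma fold_Rmin_le (t : list nat -> R) i l :
  fold_right (fun m acc => Rmin (t m) acc) i l <= i /\
  forall m, In m l -> fold_right (fun m acc => Rmin (t m) acc) i l <= t m.
Proof.
  induction l as [|x l [IHi IHl]]; simpl; split; try tauto; try lra.
  - eapply Rle_trans; [apply Rmin_r | exact IHi].
  - intros m [<-|Hm]; [apply Rmin_l|].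
    eapply Rle_trans; [apply Rmin_r | exact (IHl m Hm)].
Qed.

Lemma fold_Rmin_ge (t : list nat -> R) i l v :
  v <= i -> (forall m, In m l -> v <= t m) -> v <= fold_right (fun m acc => Rmin (t m) acc) i l.
Proof.
  intros Hi Hl. induction l as [|x l IH]; simpl; [exact Hi|].
  apply Rmin_glb; [apply Hl; left; reflexivity | apply IH; intros m Hm; apply Hl; right; exact Hm].
Qed.

Lemma trop_poly_eq y ms v :
  (forall mo, In mo ms -> v <= trop_monomial y mo) ->
  (exists mo, In mo ms /\ trop_monomial y mo = v) -> trop_poly y ms = v.
Proof.
  intros Hge [mo [Hmo Hv]]. destruct ms as [|m ms]; [destruct Hmo|]. simpl.
  apply Rle_antisym.
  - rewrite <- Hv. destruct Hmo as [<-|Hmo]; [apply (proj1 (fold_Rmin_le _ _ _)) | now apply (proj2 (fold_Rmin_le _ _ _))].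
  - apply fold_Rmin_ge; [apply Hge; left; reflexivity | intros; apply Hge; right; assumption].
Qed.

Lemma trop_monomial_nonneg y mo : (forall l, 0 <= y l) -> 0 <= trop_monomial y mo.
Proof.
  intro Hy. induction mo as [|l mo IH]; unfold trop_monomial in *; simpl; [lra|].
  specialize (Hy l). lra.
Qed.

Lemma trop_gap_monomial y m : (2 <= m)%nat -> trop_monomial y (gap_monomial m) = y (m - 1)%nat.
Proof.
  intro Hm. destruct m as [|[|m]]; try lia. unfold trop_monomial; simpl.
  rewrite Rplus_0_r. f_equal.
Qed.

Lemma In_gap_monomial p q m : (p <= m < q)%nat -> In (gap_monomial m) (web_plucker_monomials p q).
Proof. intro Hm. apply in_map, in_seq. lia. Qed.

Lemma trop_plucker_fund_coeff n a b (c : nat -> nat) :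
  (1 <= a)%nat -> (a + 2 <= b)%nat -> (b <= n)%nat ->
  (forall x, (1 <= x <= n - 2)%nat ->
     ((a <= x /\ x + 2 <= b)%nat -> c x = 1%nat) /\ (~ (a <= x /\ x + 2 <= b)%nat -> c x = 0%nat)) ->
  forall p q, (1 <= p)%nat -> (p < q)%nat -> (q <= n)%nat ->
  trop_plucker p q (fun l => INR (c l)) = interval_ind a b p * interval_ind a b q.
Proof.
  intros Ha Hab Hbn Hc p q Hp Hpq Hqn.
  assert (Hval : forall m, (2 <= m <= n - 1)%nat ->
            trop_monomial (fun l => INR (c l)) (gap_monomial m) = INR (c (m - 1)%nat))
    by (intros; apply trop_gap_monomial; lia).
  apply trop_poly_eq.
  - interval_cases a b p; interval_cases a b q; rewrite ?Rmult_0_l, ?Rmult_0_r, ?Rmult_1_l;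
      intros mo Hmo; try (apply trop_monomial_nonneg; intro; apply pos_INR).
    apply in_map_iff in Hmo as [m [<- Hm]]. apply in_seq in Hm.
    rewrite Hval, (proj1 (Hc (m - 1)%nat ltac:(lia)) ltac:(lia)) by lia. simpl; lra.
  - interval_cases a b p; interval_cases a b q; rewrite ?Rmult_0_l, ?Rmult_0_r, ?Rmult_1_l.
    1: { exists (gap_monomial p). split; [apply In_gap_monomial; lia|].
         rewrite Hval, (proj1 (Hc (p - 1)%nat ltac:(lia)) ltac:(lia)) by lia. reflexivity. }
    1: { exists (gap_monomial (q - 1)). split; [apply In_gap_monomial; lia|].
         rewrite Hval, (proj2 (Hc (q - 1 - 1)%nat ltac:(lia)) ltac:(lia)) by lia. reflexivity. }
    all: exists (gap_monomial p); split; [apply In_gap_monomial; lia|].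
    all: destruct (Nat.eq_dec p 1) as [->|Hp1]; [reflexivity|].
    all: rewrite Hval, (proj2 (Hc (p - 1)%nat ltac:(lia)) ltac:(lia)) by lia; reflexivity.
Qed.

(* The columns are (1, s k) up to [hi] and (-1, 0) after it: elements beyond [hi] are parallel
   to those of slope 0, which lets one parallel class wrap around cyclically. *)
Lemma is_positroid_of_slopes n hi (s : nat -> R) (N : nat -> Prop) (S : nat * nat -> Prop) :
  (forall k, (1 <= k <= n)%nat -> 0 <= s k) ->
  (forall k l, (1 <= k)%nat -> (k <= l)%nat -> (l <= hi)%nat -> s k <= s l) ->
  (forall k, (hi < k <= n)%nat -> s k = 0) ->
  (forall p q, (1 <= p)%nat -> (p < q)%nat -> (q <= n)%nat ->
     (S (p, q) <-> N p /\ N q /\ s p <> s q)) ->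
  is_positroid n S.
Proof.
  intros Hnonneg Hmono Hzero HS.
  set (col1 := fun k => if excluded_middle_informative (N k) then (if (k <=? hi)%nat then 1 else -1) else 0).
  set (col2 := fun k => if excluded_middle_informative (N k) then s k else 0).
  exists col1, col2.
  assert (Hminor : forall p q, (1 <= p)%nat -> (p < q)%nat -> (q <= n)%nat ->
            0 <= col1 p * col2 q - col1 q * col2 p /\
            (col1 p * col2 q - col1 q * col2 p <> 0 <-> N p /\ N q /\ s p <> s q)).
  { intros p q Hp Hpq Hq. unfold col1, col2.
    pose proof (Hnonneg p ltac:(lia)). pose proof (Hnonneg q ltac:(lia)).
    destruct (excluded_middle_informative (N p)), (excluded_middle_informative (N q));
      destruct (Nat.leb_spec p hi), (Nat.leb_spec q hi); try lia;
      try rewrite (Hzero p) by lia; try rewrite (Hzero q) by lia;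
      try pose proof (Hmono p q ltac:(lia) ltac:(lia) ltac:(lia));
      split; try tauto; try lra; split; intros; intuition lra. }
  split; intros [p q] [Hp [Hpq Hq]]; simpl in *.
  - apply Hminor; assumption.
  - rewrite HS by assumption. symmetry. apply Hminor; assumption.
Qed.

Section TightPairs.

Variables (n a b : nat) (S : nat * nat -> Prop) (w : nat -> R).

Notation ind := (interval_ind a b).

Hypothesis w_le : forall k l, (1 <= k <= n)%nat -> (1 <= l <= n)%nat -> k <> l ->
  w k + w l <= ind k * ind l.
Hypothesis S_tight : forall p q, (1 <= p)%nat -> (p < q)%nat -> (q <= n)%nat ->
  (S (p, q) <-> w p + w q = ind p * ind q).

Lemma tight_positroid_star x : (1 <= x <= n)%nat -> ind x < 2 * w x -> is_positroid n S.
Proof.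
  intros Hx Hwx.
  apply (is_positroid_of_slopes n x (fun k => if (k =? x)%nat then 1 else 0)
           (fun k => k = x \/ w x + w k = ind x * ind k)).
  - intros k _. destruct (k =? x)%nat; lra.
  - intros k l _ Hkl Hlx. destruct (Nat.eqb_spec k x), (Nat.eqb_spec l x); lra || lia.
  - intros k Hk. destruct (Nat.eqb_spec k x); [lia | reflexivity].
  - intros p q Hp Hpq Hq. rewrite (S_tight p q Hp Hpq Hq).
    destruct (Nat.eqb_spec p x) as [->|Hpx], (Nat.eqb_spec q x) as [->|Hqx]; try lia.
    + split; [intro; repeat split; auto; lra | intros [_ [[|] _]]; [lia | assumption]].
    + split; [intro; repeat split; auto; lra | intros [[|] _]; [lia | lra]].
    + pose proof (w_le p x ltac:(lia) Hx Hpx). pose proof (w_le q x ltac:(lia) Hx Hqx).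
      split; [|intros [_ [_ []]]; reflexivity].
      interval_cases a b p; interval_cases a b q; interval_cases a b x; lra.
Qed.

Lemma tight_positroid_half z : (1 <= z <= n)%nat -> 2 * w z = 1 ->
  (forall k, (1 <= k <= n)%nat -> 2 * w k <= ind k) -> is_positroid n S.
Proof.
  intros Hz Hwz Hhalf.
  apply (is_positroid_of_slopes n b (fun k => ind k * INR k) (fun k => w k = ind k - 1/2)).
  - intros k _. pose proof (pos_INR k). interval_cases a b k; lra.
  - intros k l Hk Hkl Hlb. pose proof (le_INR k l Hkl). pose proof (pos_INR k).
    interval_cases a b k; interval_cases a b l; lra || lia.
  - intros k Hk. interval_cases a b k; lra || lia.
  - intros p q Hp Hpq Hq. rewrite (S_tight p q Hp Hpq Hq).
    pose proof (Hhalf z Hz). pose proof (Hhalf p ltac:(lia)). pose proof (Hhalf q ltac:(lia)).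
    pose proof (lt_0_INR p ltac:(lia)). pose proof (lt_INR p q Hpq).
    assert (Hout : forall k, (1 <= k <= n)%nat -> ind k = 0 -> w k <= -1/2).
    { intros k Hk Hk0. destruct (Nat.eq_dec k z) as [->|Hkz]; [lra|].
      pose proof (w_le k z Hk Hz Hkz). rewrite Hk0 in *. lra. }
    pose proof (Hout p ltac:(lia)). pose proof (Hout q ltac:(lia)).
    interval_cases a b p; interval_cases a b q; rewrite ?Rmult_0_l, ?Rmult_1_l in *; split; intros; intuition lra.
Qed.

Lemma tight_positroid_bipartite z o : (1 <= z <= n)%nat -> (1 <= o <= n)%nat ->
  ind z = 1 -> ind o = 0 -> 0 < w z -> 2 * w z < 1 -> w z + w o = 0 -> is_positroid n S.
Proof.
  intros Hz Ho Hiz Hio Hpos Hlt Hzo.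
  apply (is_positroid_of_slopes n b ind (fun k => w k = (2 * ind k - 1) * w z)).
  - intros k _. interval_cases a b k; lra.
  - intros k l Hk Hkl Hlb. interval_cases a b k; interval_cases a b l; lra || lia.
  - intros k Hk. interval_cases a b k; lra || lia.
  - intros p q Hp Hpq Hq. rewrite (S_tight p q Hp Hpq Hq).
    assert (Hin : forall k, (1 <= k <= n)%nat -> ind k = 1 -> w k <= w z).
    { intros k Hk Hk1. assert (k <> o) by (intros ->; lra).
      pose proof (w_le k o Hk Ho ltac:(assumption)). rewrite Hk1, Hio in *. lra. }
    assert (Hout : forall k, (1 <= k <= n)%nat -> ind k = 0 -> w k <= - w z).
    { intros k Hk Hk0. assert (k <> z) by (intros ->; lra).
      pose proof (w_le k z Hk Hz ltac:(assumption)). rewrite Hk0, Hiz in *. lra. }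
    pose proof (Hin p ltac:(lia)). pose proof (Hin q ltac:(lia)).
    pose proof (Hout p ltac:(lia)). pose proof (Hout q ltac:(lia)).
    interval_cases a b p; interval_cases a b q; split; intros; intuition lra.
Qed.

Lemma tight_positroid_zero :
  (forall k, (1 <= k <= n)%nat -> 2 * w k <= ind k) ->
  (forall k, (1 <= k <= n)%nat -> 2 * w k < 1) ->
  (forall z o, (1 <= z <= n)%nat -> (1 <= o <= n)%nat -> ind z = 1 -> ind o = 0 ->
     w z + w o = 0 -> w z <= 0) ->
  is_positroid n S.
Proof.
  intros Hhalf Hlt Hbip.
  (* this slope collapses the interval I to the single value a + 1 *)
  apply (is_positroid_of_slopes n n (fun k => INR (Nat.min k (a + 1) + (k - b))) (fun k => w k = 0)).
  - intros k _. apply pos_INR.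
  - intros k l _ Hkl _. apply le_INR. lia.
  - intros k Hk. lia.
  - intros p q Hp Hpq Hq. rewrite (S_tight p q Hp Hpq Hq).
    assert (Hslope : INR (Nat.min p (a + 1) + (p - b)) <> INR (Nat.min q (a + 1) + (q - b)) <->
                     ~ ((a < p <= b) /\ (a < q <= b))%nat).
    { split; [intros Hne Hin; apply Hne; f_equal; lia | intros Hout; apply not_INR; lia]. }
    rewrite Hslope.
    pose proof (Hhalf p ltac:(lia)). pose proof (Hhalf q ltac:(lia)).
    pose proof (Hlt p ltac:(lia)). pose proof (Hlt q ltac:(lia)).
    interval_cases a b p; interval_cases a b q;
      try pose proof (Hbip p q ltac:(lia) ltac:(lia) ltac:(assumption) ltac:(assumption));
      try pose proof (Hbip q p ltac:(lia) ltac:(lia) ltac:(assumption) ltac:(assumption));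
      (split; [intro; repeat split | intros [? [? ?]]]); lra || lia.
Qed.

(* Depending on w, S is: a star at some x; the pairs of Z u Q meeting Z, where w is 1/2 on
   Z (inside I) and -1/2 on Q (outside I); the pairs between I and its complement on which w
   takes opposite values u and -u; or the pairs of zeros of w not inside I. *)
Lemma tight_positroid : is_positroid n S.
Proof.
  destruct (classic (exists x, (1 <= x <= n)%nat /\ ind x < 2 * w x)) as [[x [Hx Hwx]]|Hstar].
  { exact (tight_positroid_star x Hx Hwx). }
  assert (Hhalf : forall k, (1 <= k <= n)%nat -> 2 * w k <= ind k)
    by (intros k Hk; apply Rnot_lt_le; intro; apply Hstar; exists k; split; assumption).
  destruct (classic (exists z, (1 <= z <= n)%nat /\ 2 * w z = 1)) as [[z [Hz Hwz]]|Hnohalf].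
  { exact (tight_positroid_half z Hz Hwz Hhalf). }
  assert (Hlt : forall k, (1 <= k <= n)%nat -> 2 * w k < 1).
  { intros k Hk. pose proof (Hhalf k Hk).
    destruct (Req_dec (2 * w k) 1) as [Heq|Hne]; [exfalso; apply Hnohalf; exists k; split; assumption|].
    interval_cases a b k; lra. }
  destruct (classic (exists z o, (1 <= z <= n)%nat /\ (1 <= o <= n)%nat /\ ind z = 1 /\ ind o = 0 /\
                                 0 < w z /\ w z + w o = 0))
    as [[z [o [Hz [Ho [Hiz [Hio [Hpos Hzo]]]]]]]|Hnobip].
  { exact (tight_positroid_bipartite z o Hz Ho Hiz Hio Hpos (Hlt z Hz) Hzo). }
  apply tight_positroid_zero; [exact Hhalf | exact Hlt |].
  intros z o Hz Ho Hiz Hio Hzo. apply Rnot_lt_le. intro Hpos.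
  apply Hnobip. exists z, o. tauto.
Qed.

Lemma tight_pairs_one_sided :
  (forall p q, (1 <= p)%nat -> (p < q)%nat -> (q <= n)%nat -> S (p, q) -> ind p * ind q = 0) \/
  (forall p q, (1 <= p)%nat -> (p < q)%nat -> (q <= n)%nat -> S (p, q) -> ind p + ind q - 1 = ind p * ind q).
Proof.
  destruct (classic (exists p q, (1 <= p)%nat /\ (p < q)%nat /\ (q <= n)%nat /\ S (p, q) /\
                                 ind p * ind q <> 0)) as [[p1 [q1 [Hp1 [Hpq1 [Hq1 [HS1 Hin1]]]]]]|Hnone].
  - right. intros p2 q2 Hp2 Hpq2 Hq2 HS2.
    apply S_tight in HS1; [|lia..]. apply S_tight in HS2; [|lia..].
    pose proof (w_le p1 p2 ltac:(lia) ltac:(lia)) as Hp12.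
    pose proof (w_le q1 q2 ltac:(lia) ltac:(lia)) as Hq12.
    interval_cases a b p1; interval_cases a b q1; interval_cases a b p2; interval_cases a b q2;
      try lra.
    specialize (Hp12 ltac:(lia)). specialize (Hq12 ltac:(lia)). lra.
  - left. intros p q Hp Hpq Hq HS. apply NNPP. intro. apply Hnone. exists p, q. auto.
Qed.

End TightPairs.

Definition tight_set n (h : nat * nat -> R) (c : nat -> R) (c0 : R) : nat * nat -> Prop :=
  fun J => is_pair n J /\ c (fst J) + c (snd J) + c0 = h J.

Lemma is_cell_tight_set n h c c0 J0 :
  is_pair n J0 -> c (fst J0) + c (snd J0) + c0 = h J0 ->
  (forall J, is_pair n J -> c (fst J) + c (snd J) + c0 <= h J) ->
  is_cell n h (tight_set n h c c0).
Proof.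
  intros HJ0 Htight Hle. split; [exists J0; split; [|split]; assumption|split].
  - intros J [HJ _]. exact HJ.
  - exists c, c0. intros J HJ. split; [exact (Hle J HJ)|].
    unfold tight_set. tauto.
Qed.

Lemma maximal_cell_of_cover n h A B :
  is_cell n h A -> (exists J, A J /\ ~ B J) ->
  (forall S, is_cell n h S -> (forall J, S J -> A J) \/ (forall J, S J -> B J)) ->
  maximal_cell n h A.
Proof.
  intros HA [J0 [HAJ0 HBJ0]] Hcover. split; [exact HA|].
  intros S' HS' HAS'. destruct (Hcover S' HS') as [HS'A|HS'B].
  - intros J _. split; auto.
  - exfalso. apply HBJ0, HS'B, HAS', HAJ0.
Qed.

Lemma split_positroidal_of_cover n h A B :
  positroidal_subdivision n h -> is_cell n h A -> is_cell n h B ->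
  (exists J, A J /\ ~ B J) -> (exists J, B J /\ ~ A J) ->
  (forall S, is_cell n h S -> (forall J, S J -> A J) \/ (forall J, S J -> B J)) ->
  split_positroidal_subdivision n h.
Proof.
  intros Hpos HA HB HAB HBA Hcover.
  assert (Hcover' : forall S, is_cell n h S -> (forall J, S J -> B J) \/ (forall J, S J -> A J))
    by (intros S HS; apply or_comm, Hcover, HS).
  split; [exact Hpos|]. exists A, B.
  split; [exact (maximal_cell_of_cover n h A B HA HAB Hcover)|].
  split; [exact (maximal_cell_of_cover n h B A HB HBA Hcover')|].
  split.
  - destruct HAB as [J [HAJ HBJ]]. intro Hsame.
    apply HBJ, (Hsame J); [apply HA, HAJ | exact HAJ].
  - intros S [HS Hmax]. destruct (Hcover S HS) as [HSA|HSB]; [left|right]; apply Hmax; assumption.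
Qed.

Section IntervalHeights.

Variables (n a b : nat) (h : nat * nat -> R).
Hypotheses (Ha : (1 <= a)%nat) (Hab : (a + 2 <= b)%nat) (Hbn : (b <= n)%nat).

Notation ind := (interval_ind a b).

Hypothesis h_eq : forall J, is_pair n J -> h J = ind (fst J) * ind (snd J).

Lemma cell_potential S : is_cell n h S ->
  exists w : nat -> R,
    (forall k l, (1 <= k <= n)%nat -> (1 <= l <= n)%nat -> k <> l -> w k + w l <= ind k * ind l) /\
    (forall p q, (1 <= p)%nat -> (p < q)%nat -> (q <= n)%nat -> (S (p, q) <-> w p + w q = ind p * ind q)).
Proof.
  intros [_ [_ [c [c0 Hc]]]]. exists (fun k => c k + c0 / 2).
  assert (Hpair : forall p q, (1 <= p)%nat -> (p < q)%nat -> (q <= n)%nat ->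
            c p + c q + c0 <= ind p * ind q /\ (S (p, q) <-> c p + c q + c0 = ind p * ind q)).
  { intros p q Hp Hpq Hq. assert (HJ : is_pair n (p, q)) by (unfold is_pair; simpl; lia).
    pose proof (Hc (p, q) HJ) as Hcell. rewrite (h_eq (p, q) HJ) in Hcell. exact Hcell. }
  split.
  - intros k l Hk Hl Hkl. destruct (proj1 (Nat.lt_gt_cases k l) Hkl) as [Hlt|Hlt].
    + pose proof (proj1 (Hpair k l ltac:(lia) Hlt ltac:(lia))). lra.
    + pose proof (proj1 (Hpair l k ltac:(lia) Hlt ltac:(lia))). rewrite Rmult_comm. lra.
  - intros p q Hp Hpq Hq. rewrite (proj2 (Hpair p q Hp Hpq Hq)). split; intro; lra.
Qed.

Let lower_cell := tight_set n h (fun _ => 0) 0.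
Let upper_cell := tight_set n h ind (-1).

Lemma is_cell_lower : is_cell n h lower_cell.
Proof.
  apply (is_cell_tight_set n h _ _ (1%nat, 2%nat)); [unfold is_pair; simpl; lia | |].
  - rewrite h_eq by (unfold is_pair; simpl; lia). simpl.
    interval_cases a b 1%nat; [lia|]. lra.
  - intros J HJ. rewrite h_eq by exact HJ. interval_cases a b (fst J); interval_cases a b (snd J); lra.
Qed.

Lemma is_cell_upper : is_cell n h upper_cell.
Proof.
  apply (is_cell_tight_set n h _ _ ((a + 1)%nat, (a + 2)%nat)); [unfold is_pair; simpl; lia | |].
  - rewrite h_eq by (unfold is_pair; simpl; lia). simpl.
    interval_cases a b (a + 1)%nat; interval_cases a b (a + 2)%nat; lra || lia.
  - intros J HJ. rewrite h_eq by exact HJ. interval_cases a b (fst J); interval_cases a b (snd J); lra.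
Qed.

Lemma interval_heights_positroidal : positroidal_subdivision n h.
Proof.
  intros S HS. destruct (cell_potential S HS) as [w [Hle Htight]].
  exact (tight_positroid n a b S w Hle Htight).
Qed.

Lemma interval_cells_cover S : is_cell n h S ->
  (forall J, S J -> lower_cell J) \/ (forall J, S J -> upper_cell J).
Proof.
  intros HS. destruct (cell_potential S HS) as [w [Hle Htight]].
  destruct HS as [_ [Hpairs _]].
  destruct (tight_pairs_one_sided n a b S w Hle Htight) as [Hlow|Hup]; [left|right];
    intros [p q] HJ; pose proof (Hpairs _ HJ) as Hpq; destruct Hpq as [Hp [Hpq Hq]]; simpl in *;
    (split; [unfold is_pair; simpl; lia | rewrite h_eq by (unfold is_pair; simpl; lia); simpl]).
  - rewrite (Hlow p q Hp Hpq Hq HJ). lra.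
  - exact (Hup p q Hp Hpq Hq HJ).
Qed.

Lemma split_positroidal_interval_heights : ~ (a = 1%nat /\ b = n) ->
  split_positroidal_subdivision n h.
Proof.
  intros Hnf.
  apply (split_positroidal_of_cover n h lower_cell upper_cell interval_heights_positroidal
           is_cell_lower is_cell_upper); [| | exact interval_cells_cover].
  - assert (Hout : exists o, (1 < o <= n)%nat /\ ~ (a < o <= b)%nat).
    { destruct (Nat.eq_dec b n) as [->|Hb]; [exists a | exists n]; lia. }
    destruct Hout as [o [Ho Hio]]. exists (1%nat, o).
    assert (HJ : is_pair n (1%nat, o)) by (unfold is_pair; simpl; lia).
    unfold lower_cell, upper_cell, tight_set. rewrite h_eq by exact HJ. simpl.
    interval_cases a b 1%nat; [lia|]. interval_cases a b o; [lia|]. split; [split; [exact HJ | lra] | lra].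
  - exists ((a + 1)%nat, (a + 2)%nat).
    assert (HJ : is_pair n ((a + 1)%nat, (a + 2)%nat)) by (unfold is_pair; simpl; lia).
    unfold lower_cell, upper_cell, tight_set. rewrite h_eq by exact HJ. simpl.
    interval_cases a b (a + 1)%nat; [|lia]. interval_cases a b (a + 2)%nat; [|lia].
    split; [split; [exact HJ | lra] | lra].
Qed.

End IntervalHeights.

Theorem theorem5p2 (n a b : nat) (c : nat -> nat) :
  (4 <= n)%nat -> (1 <= a)%nat -> (a < b)%nat -> (b <= n)%nat ->
  ~ frozen n a b ->
  tab_equiv n (onecol a b) (fund_union n c) ->
  split_positroidal_subdivision n (F2_heights (fun l => INR (c l))).
Proof.
  intros _ Ha Hab Hbn Hfr Heq. unfold frozen in Hfr.
  assert (Hab2 : (a + 2 <= b)%nat) by lia.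
  apply (split_positroidal_interval_heights n a b); [lia.. | | tauto].
  intros [p q] [Hp [Hpq Hq]].
  exact (trop_plucker_fund_coeff n a b c Ha Hab2 Hbn (fund_coeff_of_tab_equiv n a b c Hab Heq) p q Hp Hpq Hq).
Qed.
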